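(* Let $(\Omega,+)$ be a group and $a,b$ central subgroups. Then $\mathit{Gras}_{ab}:=\mathit{Gras}(\Omega)\cap U_{ab}$ is a subtorsor of $U_{ab}$, and (for a base point $y\in\mathit{Gras}_{ab}$) the group $(\mathit{Gras}_{ab},y)$ acts from the left, by $(x,z)\mapsto\Gamma(x,a,y,b,z)$ and $(x,(z,\zeta))\mapsto(\Gamma(x,a,y,b,z),L_{xayb}(\zeta))$, and from the right, by $(z,x)\mapsto\Gamma(z,a,y,b,x)$ and $((z,\zeta),x)\mapsto(\Gamma(z,a,y,b,x),R_{aybx}(\zeta))$, on the Grassmannian $\mathit{Gras}(\Omega)$ and on the Grassmann tautological bundle $\widehat{\mathit{Gras}}(\Omega)=\{(z,\zeta): z\in\mathit{Gras}(\Omega),\ \zeta\in z\}$.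
   Context: $(\Omega,+)$ is a group written additively but not necessarily abelian; $\mathit{Gras}(\Omega)$ is its set of subgroups. For subsets $u,v$, $u\top v$ means every $\omega$ has a unique decomposition $\omega=\mu+\nu$ with $\mu\in u,\nu\in v$; then $P^u_v(\omega):=\nu$ and $\check P^v_u(\omega):=\mu$. $\Gamma(x,a,y,b,z)=\{\omega:\exists\alpha\in a,\beta\in b:\ \alpha+\omega+\beta\in y,\ \alpha+\omega\in z,\ \omega+\beta\in x\}$. $U_{ab}=\{x\subseteq\Omega: a\top x,\ x\top b\}$ with torsor law $\Gamma(\cdot,a,\cdot,b,\cdot)$; with base point $y$ it is a group with product $xz=\Gamma(x,a,y,b,z)$. $L_{xayb}:=-\check P^x_a\circ\check P^b_y+\mathrm{id}$, $R_{aybx}:=\mathrm{id}-P^x_b\circ P^{-a}_y$ (pointwise operations of maps $\Omega\to\Omega$). *)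

(* A (not necessarily abelian, possibly infinite) group written
   additively, given as a record of operations and axioms on a carrier type. *)
From Stdlib Require Import ClassicalEpsilon.

Set Implicit Arguments.

Record addGroup (T : Type) := AddGroup {
  gadd : T -> T -> T;
  gzero : T;
  gopp : T -> T;
  gaddA : forall x y z, gadd x (gadd y z) = gadd (gadd x y) z;
  gadd0l : forall x, gadd gzero x = x;
  gadd0r : forall x, gadd x gzero = x;
  gaddNl : forall x, gadd (gopp x) x = gzero;
  gaddNr : forall x, gadd x (gopp x) = gzero
}.

Section Defs.
Variables (T : Type) (G : addGroup T).

Local Notation "x + y" := (gadd G x y).
Local Notation "- x" := (gopp G x).

Definition subset := T -> Prop.

(* membership in Gras(Omega) *)
Definition is_subgroup (u : subset) : Prop :=
  u (gzero G) /\ (forall x y, u x -> u y -> u (x + y)) /\ (forall x, u x -> u (- x)).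

Definition central_subgroup (u : subset) : Prop :=
  is_subgroup u /\ forall alpha w, u alpha -> alpha + w = w + alpha.

Definition transversal (u v : subset) : Prop :=
  forall w, exists! p : T * T, u (fst p) /\ v (snd p) /\ w = fst p + snd p.

(* the (chosen) decomposition; it is the unique one whenever u ⊤ v *)
Definition decomp (u v : subset) (w : T) : T * T :=
  epsilon (inhabits (gzero G, gzero G))
    (fun p : T * T => u (fst p) /\ v (snd p) /\ w = fst p + snd p).

Definition Proj (u v : subset) (w : T) : T := snd (decomp u v w).
Definition ProjC (v u : subset) (w : T) : T := fst (decomp u v w).

Definition negset (u : subset) : subset := fun w => u (- w).

Definition Gamma (x a y b z : subset) : subset := fun w =>
  exists alpha beta, a alpha /\ b beta /\
    y (alpha + w + beta) /\ z (alpha + w) /\ x (w + beta).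

Definition U (a b : subset) : subset -> Prop :=
  fun x => transversal a x /\ transversal x b.

Definition Gras_ab (a b : subset) : subset -> Prop :=
  fun x => is_subgroup x /\ U a b x.

Definition Lop (x a y b : subset) (zeta : T) : T :=
  - (ProjC x a (ProjC b y zeta)) + zeta.

Definition Rop (a y b x : subset) (zeta : T) : T :=
  zeta + - (Proj x b (Proj (negset a) y zeta)).

End Defs.

From Stdlib Require Import ClassicalEpsilon FunctionalExtensionality PropExtensionality.

(* Everything reduces to moving witnesses.  Since a and b are central subgroups, witnesses
   can be added, inverted and commuted past anything; this gives closure of
   Gamma under the group operations and the para-associativity
   Gamma(Gamma(p,y,q),y,r) = Gamma(p,y,Gamma(q,y,r)).  The unit laws and the
   transversality of Gamma(x,y,z) come from the trivial intersections
   a /\ y = y /\ b = 0.  The maps L and R are handled through their graphs,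
   which are functional by uniqueness of decompositions, contain L (resp. R),
   and compose like Gamma; this gives the action laws on the tautological
   bundle. *)

Set Implicit Arguments.
Unset Strict Implicit.

Section AddGroupFacts.
Variables (T : Type) (G : addGroup T).

Local Notation "x + y" := (gadd G x y).
Local Notation "- x" := (gopp G x).

Lemma gaddKr x r : - x + (x + r) = r.
Proof. now rewrite gaddA, gaddNl, gadd0l. Qed.

Lemma gaddNKr x r : x + (- x + r) = r.
Proof. now rewrite gaddA, gaddNr, gadd0l. Qed.

Lemma goppK x : - - x = x.
Proof. now rewrite <- (gadd0r G (- - x)), <- (gaddNl G x), gaddA, gaddNl, gadd0l. Qed.

Lemma goppD x y : - (x + y) = - y + - x.
Proof.
  rewrite <- (gaddKr (x + y) (- y + - x)), <- (gaddA G x), gaddNKr, gaddNr.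
  now rewrite gadd0r.
Qed.

Lemma gopp0 : - gzero G = gzero G.
Proof. now rewrite <- (gadd0l G (- gzero G)), gaddNr. Qed.

Lemma gaddCA_central c : (forall w, c + w = w + c) ->
  forall x r, c + (x + r) = x + (c + r).
Proof. intros Hc x r. now rewrite gaddA, Hc, <- gaddA. Qed.

Lemma mem_eq (u : subset T) e e' : u e' -> e = e' -> u e.
Proof. now intros H ->. Qed.

Lemma subset_ext (u v : subset T) : (forall w, u w <-> v w) -> u = v.
Proof.
  intros H. apply functional_extensionality; intro w.
  apply propositional_extensionality, H.
Qed.

Lemma central_subgroup_comm u c : central_subgroup G u -> u c ->
  forall w, c + w = w + c.
Proof. intros [_ H] Hc w. apply H, Hc. Qed.

Lemma central_subgroup_commN u c : central_subgroup G u -> u c ->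
  forall w, - c + w = w + - c.
Proof. intros [[_ [_ Hn]] H] Hc w. apply H, Hn, Hc. Qed.

End AddGroupFacts.

Ltac group_simpl G :=
  repeat first [ rewrite <- (gaddA G) | rewrite (goppD G) | rewrite (goppK G)
               | rewrite (gopp0 G) | rewrite (gadd0l G) | rewrite (gadd0r G)
               | rewrite (gaddKr G) | rewrite (gaddNKr G) | rewrite (gaddNr G)
               | rewrite (gaddNl G) ].

Ltac push_central G hc :=
  repeat first [ rewrite (gaddKr G) | rewrite (gaddNKr G) | rewrite (gaddCA_central G _ hc) ];
  rewrite ?hc; group_simpl G.

(* Normalise both sides to right-associated words with every element of a
   central subgroup (given by a hypothesis [u c]) pushed to the far right. *)
Ltac group_eq G :=
  group_simpl G;
  repeat match goal with
  | Hc : ?u ?c, Hu : central_subgroup G ?u |- _ =>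
      push_central G (central_subgroup_comm Hu Hc);
      push_central G (central_subgroup_commN Hu Hc); clear Hc
  end; reflexivity.

Ltac mem_by G H := eapply mem_eq; [exact H | group_eq G].

Section Transversal.
Variables (T : Type) (G : addGroup T).

Local Notation "x + y" := (gadd G x y).
Local Notation "- x" := (gopp G x).

Lemma transversal_uniq u v m1 n1 m2 n2 : transversal G u v ->
  u m1 -> v n1 -> u m2 -> v n2 -> m1 + n1 = m2 + n2 -> m1 = m2 /\ n1 = n2.
Proof.
  intros Huv H1 H2 H3 H4 E.
  destruct (Huv (m1 + n1)) as [p [_ Hp]].
  assert (E1 := Hp (m1, n1) (conj H1 (conj H2 eq_refl))).
  assert (E2 := Hp (m2, n2) (conj H3 (conj H4 E))).
  rewrite E1 in E2. now inversion E2.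
Qed.

Lemma transversal_decomp u v w : transversal G u v ->
  exists m n, u m /\ v n /\ w = m + n.
Proof. intros Huv. destruct (Huv w) as [[m n] [H _]]. now exists m, n. Qed.

Lemma decompP u v w : transversal G u v ->
  u (fst (decomp G u v w)) /\ v (snd (decomp G u v w)) /\
  w = fst (decomp G u v w) + snd (decomp G u v w).
Proof.
  intros Huv. unfold decomp. apply epsilon_spec.
  destruct (Huv w) as [p [Hp _]]. now exists p.
Qed.

Lemma transversal_meet0 u v t : is_subgroup G u -> is_subgroup G v ->
  transversal G u v -> u t -> v t -> t = gzero G.
Proof.
  intros [u0 _] [v0 _] Huv Hu Hv.
  apply (transversal_uniq Huv Hu v0 u0 Hv).
  now rewrite gadd0l, gadd0r.
Qed.

Lemma transversalP u v : is_subgroup G u -> is_subgroup G v ->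
  (forall t, u t -> v t -> t = gzero G) ->
  (forall w, exists m n, u m /\ v n /\ w = m + n) ->
  transversal G u v.
Proof.
  intros [_ [uD uN]] [_ [vD vN]] Hmeet Hsum w.
  destruct (Hsum w) as [m [n [Hm [Hn ->]]]].
  exists (m, n). split; [auto|].
  intros [m' n'] [Hm' [Hn' E]]; simpl in *.
  assert (Ed : - m + m' = n + - n').
  { rewrite <- (gaddKr G m (n + - n')), (gaddA G m), E, <- (gaddA G m'), gaddNr, gadd0r.
    reflexivity. }
  assert (Hd : - m + m' = gzero G) by (apply Hmeet; auto; rewrite Ed; auto).
  assert (m' = m) as -> by now rewrite <- (gaddNKr G m m'), Hd, gadd0r.
  rewrite Hd in Ed.
  assert (n' = n) as -> by now rewrite <- (gadd0l G n'), Ed, <- gaddA, gaddNl, gadd0r.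
  reflexivity.
Qed.

End Transversal.

Section Gamma.
Variables (T : Type) (G : addGroup T) (a b : subset T).
Hypotheses (Ha : central_subgroup G a) (Hb : central_subgroup G b).

Local Notation "x + y" := (gadd G x y).
Local Notation "- x" := (gopp G x).
Local Notation Gamma x y z := (Gamma G x a y b z).

Lemma a0 : a (gzero G). Proof. apply Ha. Qed.
Lemma aD x y : a x -> a y -> a (x + y). Proof. apply Ha. Qed.
Lemma aN x : a x -> a (- x). Proof. apply Ha. Qed.
Lemma b0 : b (gzero G). Proof. apply Hb. Qed.
Lemma bD x y : b x -> b y -> b (x + y). Proof. apply Hb. Qed.
Lemma bN x : b x -> b (- x). Proof. apply Hb. Qed.
#[local] Hint Resolve a0 aD aN b0 bD bN : core.

Lemma Gamma_intro x y z w al be : a al -> b be ->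
  y (al + w + be) -> z (al + w) -> x (w + be) -> Gamma x y z w.
Proof. intros; exists al, be; auto. Qed.

Lemma Gamma_subgroup x y z : is_subgroup G x -> is_subgroup G y -> is_subgroup G z ->
  is_subgroup G (Gamma x y z).
Proof.
  intros [x0 [xD xN]] [y0 [yD yN]] [z0 [zD zN]].
  split; [|split].
  - apply Gamma_intro with (al := gzero G) (be := gzero G); auto.
  - intros w1 w2 [al1 [be1 [Ha1 [Hb1 [H1 [H2 H3]]]]]] [al2 [be2 [Ha2 [Hb2 [K1 [K2 K3]]]]]].
    apply Gamma_intro with (al := al1 + al2) (be := be1 + be2); auto.
    + pose proof (yD _ _ H1 K1). mem_by G H.
    + pose proof (zD _ _ H2 K2). mem_by G H.
    + pose proof (xD _ _ H3 K3). mem_by G H.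
  - intros w [al [be [Hal [Hbe [H1 [H2 H3]]]]]].
    apply Gamma_intro with (al := - al) (be := - be); auto.
    + pose proof (yN _ H1). mem_by G H.
    + pose proof (zN _ H2). mem_by G H.
    + pose proof (xN _ H3). mem_by G H.
Qed.

Lemma Gamma_assoc p q r y : Gamma (Gamma p y q) y r = Gamma p y (Gamma q y r).
Proof.
  apply subset_ext; intro w; split.
  - intros [al [be [Hal [Hbe [H1 [H2 [al1 [be1 [Hal1 [Hbe1 [K1 [K2 K3]]]]]]]]]]]].
    apply Gamma_intro with (al := al1) (be := be + be1); auto.
    + mem_by G K1.
    + apply Gamma_intro with (al := al + - al1) (be := be); auto.
      * mem_by G H1.
      * mem_by G H2.
      * mem_by G K2.
    + mem_by G K3.
  - intros [al [be [Hal [Hbe [H1 [[al1 [be1 [Hal1 [Hbe1 [K1 [K2 K3]]]]]] H3]]]]]].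
    apply Gamma_intro with (al := al1 + al) (be := be1); auto.
    + mem_by G K1.
    + mem_by G K2.
    + apply Gamma_intro with (al := al) (be := - be1 + be); auto.
      * mem_by G H1.
      * mem_by G K3.
      * mem_by G H3.
Qed.

Lemma Gamma_idl y z : is_subgroup G y -> transversal G a y -> transversal G y b ->
  Gamma y y z = z.
Proof.
  intros Hy Tay Tyb. pose proof Hy as [_ [yD yN]].
  apply subset_ext; intro w; split.
  - intros [al [be [Hal [Hbe [H1 [H2 H3]]]]]].
    assert (Hyal : y al) by (pose proof (yD _ _ H1 (yN _ H3)); mem_by G H).
    assert (al = gzero G) as -> by (apply (transversal_meet0 (proj1 Ha) Hy Tay); auto).
    now rewrite gadd0l in H2.
  - intros Hz. destruct (transversal_decomp w Tyb) as [m [n [Hm [Hn ->]]]].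
    apply Gamma_intro with (al := gzero G) (be := - n); auto.
    + mem_by G Hm.
    + now rewrite gadd0l.
    + mem_by G Hm.
Qed.

Lemma Gamma_idr y z : is_subgroup G y -> transversal G a y -> transversal G y b ->
  Gamma z y y = z.
Proof.
  intros Hy Tay Tyb. pose proof Hy as [_ [yD yN]].
  apply subset_ext; intro w; split.
  - intros [al [be [Hal [Hbe [H1 [H2 H3]]]]]].
    assert (Hybe : y be) by (pose proof (yD _ _ (yN _ H2) H1); mem_by G H).
    assert (be = gzero G) as -> by (apply (transversal_meet0 Hy (proj1 Hb) Tyb); auto).
    now rewrite gadd0r in H3.
  - intros Hz. destruct (transversal_decomp w Tay) as [m [n [Hm [Hn ->]]]].
    apply Gamma_intro with (al := - m) (be := gzero G); auto.
    + mem_by G Hn.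
    + mem_by G Hn.
    + now rewrite gadd0r.
Qed.

Lemma transversal_Gamma_l x y z :
  is_subgroup G x -> is_subgroup G y -> is_subgroup G z ->
  transversal G a x -> transversal G y b -> transversal G a z ->
  transversal G a (Gamma x y z).
Proof.
  intros Hx Hy Hz Tax Tyb Taz.
  apply transversalP; [apply Ha | apply Gamma_subgroup; auto | |].
  - intros t Hat [al [be [Hal [Hbe [H1 [H2 H3]]]]]].
    assert (al + t = gzero G) as E
      by (apply (transversal_meet0 (proj1 Ha) Hz Taz); auto).
    rewrite E, gadd0l in H1.
    assert (be = gzero G) as -> by (apply (transversal_meet0 Hy (proj1 Hb) Tyb); auto).
    rewrite gadd0r in H3.
    apply (transversal_meet0 (proj1 Ha) Hx Tax); auto.
  - intros w.
    destruct (transversal_decomp w Taz) as [mu [ze [Hmu [Hze Ew]]]].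
    destruct (transversal_decomp ze Tyb) as [et [nu [Het [Hnu Eze]]]].
    destruct (transversal_decomp (w + - nu) Tax) as [al [xi [Hal [Hxi Exi]]]].
    exists al, (- al + w). split; [exact Hal | split; [| now rewrite gaddNKr]].
    apply Gamma_intro with (al := - mu + al) (be := - nu); auto.
    + subst w ze. mem_by G Het.
    + subst w ze. mem_by G Hze.
    + assert (xi = - al + (w + - nu)) as Exi' by now rewrite Exi, gaddKr.
      rewrite Exi' in Hxi. mem_by G Hxi.
Qed.

Lemma transversal_Gamma_r x y z :
  is_subgroup G x -> is_subgroup G y -> is_subgroup G z ->
  transversal G x b -> transversal G a y -> transversal G z b ->
  transversal G (Gamma x y z) b.
Proof.
  intros Hx Hy Hz Txb Tay Tzb.
  apply transversalP; [apply Gamma_subgroup; auto | apply Hb | |].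
  - intros t [al [be [Hal [Hbe [H1 [H2 H3]]]]]] Hbt.
    assert (t + be = gzero G) as E
      by (apply (transversal_meet0 Hx (proj1 Hb) Txb); auto).
    rewrite <- (gaddA G al), E, gadd0r in H1.
    assert (al = gzero G) as -> by (apply (transversal_meet0 (proj1 Ha) Hy Tay); auto).
    rewrite gadd0l in H2.
    apply (transversal_meet0 Hz (proj1 Hb) Tzb); auto.
  - intros w.
    destruct (transversal_decomp w Txb) as [xi [nu [Hxi [Hnu Ew]]]].
    destruct (transversal_decomp (w + - nu) Tay) as [mu [et [Hmu [Het Eet]]]].
    destruct (transversal_decomp (- mu + w) Tzb) as [ze [be [Hze [Hbe Eze]]]].
    exists (w + - be), be. split; [| split; [exact Hbe | now rewrite <- gaddA, gaddNl, gadd0r]].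
    apply Gamma_intro with (al := - mu) (be := - nu + be); auto.
    + assert (et = - mu + (w + - nu)) as Eet' by now rewrite Eet, gaddKr.
      rewrite Eet' in Het. mem_by G Het.
    + assert (ze = - mu + w + - be) as Eze'
        by now rewrite Eze, <- gaddA, gaddNr, gadd0r.
      rewrite Eze' in Hze. mem_by G Hze.
    + subst w. mem_by G Hxi.
Qed.

Lemma Gras_ab_Gamma x y z : Gras_ab G a b x -> Gras_ab G a b y -> Gras_ab G a b z ->
  Gras_ab G a b (Gamma x y z).
Proof.
  intros [Hx [Tax Txb]] [Hy [Tay Tyb]] [Hz [Taz Tzb]].
  split; [apply Gamma_subgroup; auto | split].
  - apply transversal_Gamma_l; auto.
  - apply transversal_Gamma_r; auto.
Qed.

Definition Lgraph x y zeta t : Prop := exists al be,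
  a al /\ b be /\ x (t + be) /\ y (al + t + be) /\ al + t = zeta.

Definition Rgraph x y zeta t : Prop := exists al be,
  a al /\ b be /\ x (al + t) /\ y (al + t + be) /\ t + be = zeta.

Lemma Lop_graph x y zeta : transversal G a x -> transversal G y b ->
  Lgraph x y zeta (Lop G x a y b zeta).
Proof.
  intros Tax Tyb. unfold Lop, ProjC.
  destruct (decompP zeta Tyb) as [Hmu [Hnu Ezeta]].
  set (mu := fst (decomp G y b zeta)) in *. set (nu := snd (decomp G y b zeta)) in *.
  clearbody mu nu.
  destruct (decompP mu Tax) as [Hal [Hxi Emu]].
  set (al := fst (decomp G a x mu)) in *. set (xi := snd (decomp G a x mu)) in *.
  clearbody al xi. subst zeta mu.
  exists al, (- nu). repeat split; auto.
  - mem_by G Hxi.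
  - mem_by G Hmu.
  - group_eq G.
Qed.

Lemma Lgraph_functional x y zeta t1 t2 : transversal G a x -> transversal G y b ->
  Lgraph x y zeta t1 -> Lgraph x y zeta t2 -> t1 = t2.
Proof.
  intros Tax Tyb [al1 [be1 [Hal1 [Hbe1 [H1 [H2 <-]]]]]] [al2 [be2 [Hal2 [Hbe2 [K1 [K2 E]]]]]].
  assert (t2 = - al2 + (al1 + t1)) as -> by now rewrite <- E, gaddKr.
  clear E.
  destruct (transversal_uniq Tyb H2 (bN Hbe1) K2 (bN Hbe2)) as [_ Ebe]; [group_eq G|].
  assert (be1 = be2) as <- by now rewrite <- (goppK G be1), Ebe, goppK.
  destruct (transversal_uniq Tax Hal1 H1 Hal2 K1) as [<- _]; [group_eq G|].
  now rewrite gaddKr.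
Qed.

Lemma Lgraph_Gamma x y z zeta t : Lgraph x y zeta t -> z zeta -> Gamma x y z t.
Proof. intros [al [be [Hal [Hbe [H1 [H2 <-]]]]]] Hz. now exists al, be. Qed.

Lemma Lgraph_refl y zeta : transversal G y b -> Lgraph y y zeta zeta.
Proof.
  intros Tyb. destruct (transversal_decomp zeta Tyb) as [m [n [Hm [Hn ->]]]].
  exists (gzero G), (- n). repeat split; auto.
  - mem_by G Hm.
  - mem_by G Hm.
  - group_eq G.
Qed.

Lemma Lgraph_comp x x' y zeta s t :
  Lgraph x' y zeta s -> Lgraph x y s t -> Lgraph (Gamma x y x') y zeta t.
Proof.
  intros [al1 [be1 [Hal1 [Hbe1 [H1 [H2 <-]]]]]] [al2 [be2 [Hal2 [Hbe2 [K1 [K2 <-]]]]]].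
  exists (al1 + al2), be1. repeat split; auto.
  - apply Gamma_intro with (al := al2) (be := - be1 + be2); auto.
    + mem_by G K2.
    + mem_by G H1.
    + mem_by G K1.
  - mem_by G H2.
  - group_eq G.
Qed.

Lemma negset_a : negset G a = a.
Proof.
  apply subset_ext; intro w; unfold negset; split; auto.
  intros H. rewrite <- (goppK G w). auto.
Qed.

Lemma Rop_graph x y zeta : transversal G a y -> transversal G x b ->
  Rgraph x y zeta (Rop G a y b x zeta).
Proof.
  intros Tay Txb. unfold Rop, Proj.
  rewrite negset_a.
  destruct (decompP zeta Tay) as [Hal [Het Ezeta]].
  set (al := fst (decomp G a y zeta)) in *. set (et := snd (decomp G a y zeta)) in *.
  clearbody al et.
  destruct (decompP et Txb) as [Hxi [Hnu Eet]].
  set (xi := fst (decomp G x b et)) in *. set (nu := snd (decomp G x b et)) in *.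
  clearbody xi nu. subst zeta et.
  exists (- al), nu. repeat split; auto.
  - mem_by G Hxi.
  - mem_by G Het.
  - group_eq G.
Qed.

Lemma Rgraph_functional x y zeta t1 t2 : transversal G a y -> transversal G x b ->
  Rgraph x y zeta t1 -> Rgraph x y zeta t2 -> t1 = t2.
Proof.
  intros Tay Txb [al1 [be1 [Hal1 [Hbe1 [H1 [H2 <-]]]]]] [al2 [be2 [Hal2 [Hbe2 [K1 [K2 E]]]]]].
  assert (t2 = t1 + be1 + - be2) as -> by now rewrite <- E, <- gaddA, gaddNr, gadd0r.
  clear E.
  destruct (transversal_uniq Tay (aN Hal1) H2 (aN Hal2) K2) as [Eal _]; [group_eq G|].
  assert (al1 = al2) as <- by now rewrite <- (goppK G al1), Eal, goppK.
  destruct (transversal_uniq Txb H1 Hbe1 K1 Hbe2) as [_ <-]; [group_eq G|].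
  group_eq G.
Qed.

Lemma Rgraph_Gamma x y z zeta t : Rgraph x y zeta t -> z zeta -> Gamma z y x t.
Proof. intros [al [be [Hal [Hbe [H1 [H2 <-]]]]]] Hz. now exists al, be. Qed.

Lemma Rgraph_refl y zeta : transversal G a y -> Rgraph y y zeta zeta.
Proof.
  intros Tay. destruct (transversal_decomp zeta Tay) as [m [n [Hm [Hn ->]]]].
  exists (- m), (gzero G). repeat split; auto.
  - mem_by G Hn.
  - mem_by G Hn.
  - group_eq G.
Qed.

Lemma Rgraph_comp x x' y zeta s t :
  Rgraph x y zeta s -> Rgraph x' y s t -> Rgraph (Gamma x y x') y zeta t.
Proof.
  intros [al1 [be1 [Hal1 [Hbe1 [H1 [H2 <-]]]]]] [al2 [be2 [Hal2 [Hbe2 [K1 [K2 <-]]]]]].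
  exists al1, (be2 + be1). repeat split; auto.
  - apply Gamma_intro with (al := - al1 + al2) (be := be2); auto.
    + mem_by G K2.
    + mem_by G K1.
    + mem_by G H1.
  - mem_by G H2.
  - group_eq G.
Qed.

Lemma Gamma_Lop x y z zeta : transversal G a x -> transversal G y b -> z zeta ->
  Gamma x y z (Lop G x a y b zeta).
Proof. intros Tax Tyb. apply Lgraph_Gamma, Lop_graph; assumption. Qed.

Lemma Lop_id y zeta : transversal G a y -> transversal G y b -> Lop G y a y b zeta = zeta.
Proof.
  intros Tay Tyb.
  apply (Lgraph_functional Tay Tyb (Lop_graph zeta Tay Tyb) (Lgraph_refl zeta Tyb)).
Qed.

Lemma Lop_comp x x' y zeta :
  Gras_ab G a b x -> Gras_ab G a b x' -> Gras_ab G a b y ->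
  Lop G x a y b (Lop G x' a y b zeta) = Lop G (Gamma x y x') a y b zeta.
Proof.
  intros Gx Gx' Gy. pose proof (Gras_ab_Gamma Gx Gy Gx') as [_ [Tax'' _]].
  destruct Gx as [_ [Tax _]], Gx' as [_ [Tax' _]], Gy as [_ [_ Tyb]].
  eapply (Lgraph_functional Tax'' Tyb); [| apply Lop_graph; assumption].
  apply (Lgraph_comp (Lop_graph zeta Tax' Tyb) (Lop_graph _ Tax Tyb)).
Qed.

Lemma Gamma_Rop x y z zeta : transversal G a y -> transversal G x b -> z zeta ->
  Gamma z y x (Rop G a y b x zeta).
Proof. intros Tay Txb. apply Rgraph_Gamma, Rop_graph; assumption. Qed.

Lemma Rop_id y zeta : transversal G a y -> transversal G y b -> Rop G a y b y zeta = zeta.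
Proof.
  intros Tay Tyb.
  apply (Rgraph_functional Tay Tyb (Rop_graph zeta Tay Tyb) (Rgraph_refl zeta Tay)).
Qed.

Lemma Rop_comp x x' y zeta :
  Gras_ab G a b x -> Gras_ab G a b x' -> Gras_ab G a b y ->
  Rop G a y b x' (Rop G a y b x zeta) = Rop G a y b (Gamma x y x') zeta.
Proof.
  intros Gx Gx' Gy. pose proof (Gras_ab_Gamma Gx Gy Gx') as [_ [_ Txb'']].
  destruct Gx as [_ [_ Txb]], Gx' as [_ [_ Txb']], Gy as [_ [Tay _]].
  eapply (Rgraph_functional Tay Txb''); [| apply Rop_graph; assumption].
  apply (Rgraph_comp (Rop_graph zeta Tay Txb) (Rop_graph _ Tay Txb')).
Qed.

End Gamma.

Theorem theorem7p6 (T : Type) (G : addGroup T) (a b : subset T) :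
  central_subgroup G a -> central_subgroup G b ->
  (forall x y z, Gras_ab G a b x -> Gras_ab G a b y -> Gras_ab G a b z ->
     Gras_ab G a b (Gamma G x a y b z)) /\
  (forall y, Gras_ab G a b y ->
    ((forall x z, Gras_ab G a b x -> is_subgroup G z ->
        is_subgroup G (Gamma G x a y b z)) /\
     (forall z, is_subgroup G z -> Gamma G y a y b z = z) /\
     (forall x x' z, Gras_ab G a b x -> Gras_ab G a b x' -> is_subgroup G z ->
        Gamma G x a y b (Gamma G x' a y b z) =
        Gamma G (Gamma G x a y b x') a y b z)) /\
    ((forall x z zeta, Gras_ab G a b x -> is_subgroup G z -> z zeta ->
        Gamma G x a y b z (Lop G x a y b zeta)) /\
     (forall z zeta, is_subgroup G z -> z zeta -> Lop G y a y b zeta = zeta) /\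
     (forall x x' z zeta, Gras_ab G a b x -> Gras_ab G a b x' ->
        is_subgroup G z -> z zeta ->
        Lop G x a y b (Lop G x' a y b zeta) =
        Lop G (Gamma G x a y b x') a y b zeta)) /\
    ((forall z x, is_subgroup G z -> Gras_ab G a b x ->
        is_subgroup G (Gamma G z a y b x)) /\
     (forall z, is_subgroup G z -> Gamma G z a y b y = z) /\
     (forall z x x', is_subgroup G z -> Gras_ab G a b x -> Gras_ab G a b x' ->
        Gamma G (Gamma G z a y b x) a y b x' =
        Gamma G z a y b (Gamma G x a y b x'))) /\
    ((forall z zeta x, is_subgroup G z -> z zeta -> Gras_ab G a b x ->
        Gamma G z a y b x (Rop G a y b x zeta)) /\
     (forall z zeta, is_subgroup G z -> z zeta -> Rop G a y b y zeta = zeta) /\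
     (forall z zeta x x', is_subgroup G z -> z zeta ->
        Gras_ab G a b x -> Gras_ab G a b x' ->
        Rop G a y b x' (Rop G a y b x zeta) =
        Rop G a y b (Gamma G x a y b x') zeta))).
Proof.
  intros Ha Hb. split; [exact (Gras_ab_Gamma Ha Hb) |].
  intros y Gy. pose proof Gy as [Hy [Tay Tyb]].
  split; [| split; [| split]]; (split; [| split]).
  - intros x z [Hx _] Hz. exact (Gamma_subgroup Ha Hb Hx Hy Hz).
  - intros z _. exact (Gamma_idl Ha Hb z Hy Tay Tyb).
  - intros x x' z _ _ _. symmetry. apply (Gamma_assoc Ha Hb).
  - intros x z zeta [_ [Tax _]] _. exact (Gamma_Lop Ha Hb Tax Tyb).
  - intros z zeta _ _. exact (Lop_id Ha Hb zeta Tay Tyb).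
  - intros x x' z zeta Gx Gx' _ _. exact (Lop_comp Ha Hb zeta Gx Gx' Gy).
  - intros z x Hz [Hx _]. exact (Gamma_subgroup Ha Hb Hz Hy Hx).
  - intros z _. exact (Gamma_idr Ha Hb z Hy Tay Tyb).
  - intros z x x' _ _ _. apply (Gamma_assoc Ha Hb).
  - intros z zeta x _ Hzeta [_ [_ Txb]]. exact (Gamma_Rop Ha Tay Txb Hzeta).
  - intros z zeta _ _. exact (Rop_id Ha Hb zeta Tay Tyb).
  - intros z zeta x x' _ _ Gx Gx'. exact (Rop_comp Ha Hb zeta Gx Gx' Gy).
Qed.
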